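(* Let $n\ge1$, $k\ge2$, $r=n(k-1)$, and let $\mathbf c_0$ be a stable configuration on the hyperpath $P_n^k$ with bank vertex $0$. Let $\mathcal G(\mathbf c_0)$ be its firing graph. Then: (i) for every $t\in[n]$ and every configuration $\mathbf c$ of $\mathcal G(\mathbf c_0)$, the vertex $t(k-1)$ is fired at $\mathbf c$ (i.e. $\mathbf c$ is not stable and $u_{\mathbf c}=t(k-1)$) if and only if $\mathbf c(t(k-1))=k-1$; (ii) for every configuration $\mathbf c$ of $\mathcal G(\mathbf c_0)$, $\omega(\mathbf c)\ge\omega(\mathbf c_0)$.
   Context: The $k$-uniform hyperpath $P_n^k$ has vertex set $\{0,1,\dots,n(k-1)\}$ and edges $\mathbf e_t=\{(k-1)(t-1),(k-1)(t-1)+1,\dots,(k-1)t\}$ for $t\in[n]$. A configuration is a function $\mathbf c:[r]\to\mathbb Z_{\ge0}$ (the value at the bank vertex $0$ is ignored), with weight $\omega(\mathbf c)=\sum_{v=1}^r\mathbf c(v)$. It is stable if $0\le\mathbf c(v)\le k-2$ for all $v\in[r]$. For a stable $\mathbf c_0$ put $\bar{\mathbf c}_0(v)=\mathbf c_0(v)+1$ for $v\in[k-1]$ and $\bar{\mathbf c}_0(v)=\mathbf c_0(v)$ otherwise. For a non-stable configuration $\mathbf c$ let $u_{\mathbf c}=\max\{v\in[r]:\mathbf c(v)\ge k-1\}$; for each edge $\mathbf e$ containing $u_{\mathbf c}$ define $\mathbf c_{\mathbf e}$ by $\mathbf c_{\mathbf e}(u_{\mathbf c})=\mathbf c(u_{\mathbf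 c})-(k-1)$, $\mathbf c_{\mathbf e}(v)=\mathbf c(v)+1$ for $v\in\mathbf e\setminus\{u_{\mathbf c},0\}$, and $\mathbf c_{\mathbf e}(v)=\mathbf c(v)$ otherwise (''firing $u_{\mathbf c}$ on $\mathbf e$''). The firing graph $\mathcal G(\mathbf c_0)$ is the directed graph whose vertices are $\mathbf c_0$ together with all configurations obtainable from $\bar{\mathbf c}_0$ by finitely many such firing steps (each applied to a non-stable configuration), and whose arrows are $\mathbf c_0\to\bar{\mathbf c}_0$ and $\mathbf c\to\mathbf c_{\mathbf e}$ for every non-stable vertex $\mathbf c$ and every edge $\mathbf e\ni u_{\mathbf c}$. *)

From mathcomp Require Import all_boot.
Set Implicit Arguments. Unset Strict Implicit. Unset Printing Implicit Defensive.

(* A configuration is a function nat -> nat; only its values on [r] = {1..r}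
   matter (the value at the bank vertex 0 and beyond r are never used by
   stability, weight, u_c or the statement). *)
Definition config := nat -> nat.

Definition in_edge (k t v : nat) : bool :=
  ((k - 1) * (t - 1) <= v) && (v <= (k - 1) * t).

Definition weight (r : nat) (c : config) : nat := \sum_(1 <= v < r.+1) c v.

Definition stable (k r : nat) (c : config) : Prop :=
  forall v, 1 <= v <= r -> c v <= k - 2.

Definition cbar (k : nat) (c0 : config) : config :=
  fun v => if (1 <= v) && (v <= k - 1) then (c0 v).+1 else c0 v.

(* u_c = max {v in [r] : c(v) >= k-1}  (meaningful for non-stable c) *)
Definition u_c (k r : nat) (c : config) : nat :=
  \max_(1 <= v < r.+1 | k - 1 <= c v) v.

Definition fire (k : nat) (c : config) (u t : nat) : config :=
  fun v => if v == u then c v - (k - 1)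
           else if in_edge k t v && (v != 0) then (c v).+1 else c v.

Definition step (n k : nat) (c c' : config) : Prop :=
  let r := n * (k - 1) in
  ~ stable k r c /\
  exists t, [/\ 1 <= t <= n, in_edge k t (u_c k r c) & c' = fire k c (u_c k r c) t].

Inductive reach (n k : nat) (s : config) : config -> Prop :=
| reach_refl : reach n k s s
| reach_step : forall c c', reach n k s c -> step n k c c' -> reach n k s c'.

Definition in_firing_graph (n k : nat) (c0 c : config) : Prop :=
  c = c0 \/ reach n k (cbar k c0) c.

From mathcomp Require Import all_boot zify.
Set Implicit Arguments. Unset Strict Implicit. Unset Printing Implicit Defensive.

(* Write K = k - 1 and cut [r] into the blocks (iK, (i+1)K], whose right ends are the
   junctions shared by two consecutive edges. Because the rightmost unstable vertex is
   always fired, the configurations reachable from bar c0 stay in a rigid shape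
   ([firing_inv]): up to the rightmost block reached so far, each vertex of a block fires
   at most once after chips have entered that block, every such firing adds a chip to the
   rest of the block, and each junction holds exactly as many chips as there were firings
   in the block to its right. Hence at most K firings ever happen in the first block;
   these are the only firings that lose a chip (to the bank), and bar c0 added K chips,
   which gives (ii). The same shape bounds every junction by K and makes everything to the
   right of a junction holding K chips stable, which gives (i). *)

Lemma sum_nat_bool_le (x : nat -> bool) a b : \sum_(a <= v < b) (x v : nat) <= b - a.
Proof.
rewrite -[b - a]muln1 -sum_nat_const_nat.
by apply: leq_sum => v _; exact: leq_b1.
Qed.

Lemma sum_indicator_interval a b N :
  \sum_(1 <= v < N.+1) ((a <= v) && (v <= b) : nat) = minn N b - a.-1.
Proof.
elim: N => [|N IH]; first by rewrite big_geq //; lia.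
rewrite big_nat_recr //= IH.
case: (ltnP b N.+1) => hb; case: (leqP a N.+1) => ha /=; lia.
Qed.

Lemma bigmax_natP (P : pred nat) a b v : a <= v < b -> P v ->
  let M := \max_(a <= i < b | P i) i in
  [/\ a <= M < b, P M & forall w, a <= w < b -> P w -> w <= M].
Proof.
move=> hv Pv M.
have M_max w : a <= w < b -> P w -> w <= M.
  by move=> hw Pw; apply: (leq_bigmax_seq (F := id)); rewrite ?mem_index_iota.
have [M0|[hM PM]] : M = 0 \/ (a <= M < b /\ P M); last by split.
  rewrite /M big_seq_cond.
  apply: (big_ind (fun y => y = 0 \/ (a <= y < b /\ P y))); first by left.
    by move=> y z hy hz; rewrite /maxn; case: ifP.
  by move=> i /andP[]; rewrite mem_index_iota => hi Pi; right.
have := M_max v hv Pv; rewrite M0 leqn0 => /eqP v0.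
by subst v; split=> // w hw Pw; rewrite -M0; exact: M_max.
Qed.

Lemma sum_nat_eq_indicator a b u : \sum_(a <= w < b) ((w == u) : nat) = (a <= u < b).
Proof.
rewrite (eq_bigr (fun w => if w == u then 1 else 0)) => [|w _]; last by case: (w == u).
by rewrite -big_mkcond big_nat1_eq; case: (_ <= _ < _).
Qed.

Definition block_count (K : nat) (x : nat -> bool) (i : nat) : nat :=
  \sum_((i * K).+1 <= v < (i.+1 * K).+1) (x v : nat).

Lemma eq_block_count K x y i :
  (forall v, i * K < v <= i.+1 * K -> x v = y v) -> block_count K x i = block_count K y i.
Proof. by move=> xy; apply: eq_big_nat => v hv; rewrite xy. Qed.

Lemma block_count0 K x i :
  (forall v, i * K < v <= i.+1 * K -> x v = false) -> block_count K x i = 0.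
Proof.
move=> x0; rewrite (@eq_block_count K x (fun _ => false)) //.
by rewrite /block_count sum_nat_const_nat muln0.
Qed.

Lemma block_count_le K x i : block_count K x i <= K.
Proof. by apply: leq_trans (sum_nat_bool_le _ _ _) _; rewrite mulSn; lia. Qed.

Lemma block_count_mark K x i u : x u = false ->
  block_count K (fun v => x v || (v == u)) i = block_count K x i + (i * K < u <= i.+1 * K).
Proof.
move=> xu; rewrite /block_count.
rewrite (eq_bigr (fun v => x v + (v == u))) => [|v _]; last first.
  by case: eqP => [->|_]; rewrite ?xu ?orbF ?addn0.
by rewrite big_split /= sum_nat_eq_indicator ltnS.
Qed.

Lemma block_count_lt K x i u : i * K < u <= i.+1 * K -> x u = false ->
  block_count K x i < K.
Proof.
move=> hu xu; have := block_count_le K (fun v => x v || (v == u)) i.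
by rewrite block_count_mark // hu addn1.
Qed.

Lemma stableP k r c : reflect (stable k r c) (all (fun v => c v <= k - 2) (index_iota 1 r.+1)).
Proof.
apply: (iffP allP) => st v hv; first by apply: st; rewrite mem_index_iota ltnS.
by apply: st; move: hv; rewrite mem_index_iota ltnS.
Qed.

Lemma unstable_witness k r c : ~ stable k r c -> exists2 w, 1 <= w <= r & k - 1 <= c w.
Proof.
move=> /stableP /allPn [w]; rewrite mem_index_iota ltnS -ltnNge => hw cw.
by exists w => //; lia.
Qed.

Lemma u_c_spec k r c w : 1 <= w <= r -> k - 1 <= c w ->
  [/\ 1 <= u_c k r c <= r, k - 1 <= c (u_c k r c)
    & forall v, 1 <= v <= r -> k - 1 <= c v -> v <= u_c k r c].
Proof.
move=> hw cw; have hw' : 1 <= w < r.+1 by rewrite ltnS.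
have [hu cu u_max] := bigmax_natP (P := fun v => k - 1 <= c v) hw' cw.
by split=> [|//|v hv]; [rewrite -ltnS | apply: u_max; rewrite ltnS].
Qed.

Lemma fires_atP k r c j : 1 < k -> 1 <= j <= r -> c j <= k - 1 ->
  (c j = k - 1 -> forall v, j < v <= r -> c v <= k - 2) ->
  (~ stable k r c /\ u_c k r c = j) <-> c j = k - 1.
Proof.
move=> k2 hj cj right_stable; split.
  case=> /unstable_witness [w hw cw] uj.
  by have [_ + _] := u_c_spec hw cw; rewrite uj; lia.
move=> cjK; have [hu cu u_max] := u_c_spec hj (eq_leq (esym cjK)).
split=> [st|]; first by have := st j hj; lia.
apply/eqP; rewrite eqn_leq u_max ?cjK // andbT leqNgt; apply/negP => ju.
by have := right_stable cjK (u_c k r c); lia.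
Qed.

Lemma fire_u k c u t : fire k c u t u = c u - (k - 1).
Proof. by rewrite /fire eqxx. Qed.

Lemma fire_neq k c u t v : v != u -> fire k c u t v = c v + (in_edge k t v && (v != 0)).
Proof. by move=> /negbTE vu; rewrite /fire vu; case: ifP; rewrite ?addn1 ?addn0. Qed.

Section FiringInvariant.

(* Configurations are typed [nat -> nat] rather than [config] so that [lia] recognises
   their values as natural numbers. *)

Variables (n K : nat) (c0 : nat -> nat).
Hypotheses (K_gt0 : 0 < K) (c0_stable : stable K.+1 (n * K) c0).

Local Notation k := K.+1.
Local Notation r := (n * K).

Lemma in_edgeE j v : in_edge k j.+1 v = (j * K <= v <= j.+1 * K).
Proof. by rewrite /in_edge !subn1 /= !(mulnC K). Qed.

Lemma weight_fire c u j : j < n -> in_edge k j.+1 u -> 0 < u -> K <= c u ->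
  weight r (fire k c u j.+1) + (j == 0) = weight r c.
Proof.
move=> jn ue u0 cu; have := ue; rewrite in_edgeE => /andP[ju uj].
have pointwise v : 0 < v -> fire k c u j.+1 v + k * (v == u) = c v + in_edge k j.+1 v.
  rewrite /fire; case: eqP => [->|_] v0; first by rewrite ue muln1; lia.
  by rewrite muln0 addn0 -lt0n v0 andbT; case: (in_edge _ _ _); rewrite ?addn1 ?addn0.
have sums : \sum_(1 <= v < r.+1) (fire k c u j.+1 v + k * (v == u))
          = \sum_(1 <= v < r.+1) (c v + in_edge k j.+1 v).
  by apply: eq_big_nat => v /andP[v0 _]; exact: pointwise.
have edge_size : \sum_(1 <= v < r.+1) (in_edge k j.+1 v : nat) = minn r (j.+1 * K) - (j * K).-1.
  by rewrite -sum_indicator_interval; apply: eq_big_nat => v _; rewrite in_edgeE.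
have jK : j.+1 * K <= r := leq_mul jn (leqnn K).
move: sums; rewrite !big_split /= -big_distrr /= sum_nat_eq_indicator edge_size -!/(weight _ _).
by clear pointwise edge_size ue; case: j => [|j] in ju uj jK jn *; lia.
Qed.

(* [m] is the rightmost block reached so far, [x] marks the vertices fired since the chips
   entered their block, and [d] records the (stable) contents of a block at that moment. *)
Record firing_inv (m : nat) (x : nat -> bool) (d c : nat -> nat) : Prop := FiringInv {
  inv_front_lt : m < n;
  inv_ref_stable : forall v, 1 <= v <= r -> d v <= k - 2;
  inv_beyond_stable : forall v, m.+1 * K < v <= r -> c v <= k - 2;
  inv_interior : forall i v, i <= m -> i * K < v < i.+1 * K ->
    c v + k * x v = d v + 1 + block_count K x i;
  inv_junction : forall i, i < m ->
    x (i.+1 * K) = false /\ c (i.+1 * K) = block_count K x i.+1;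
  inv_front : if x (m.+1 * K) then c (m.+1 * K) < block_count K x m else c (m.+1 * K) <= K;
  inv_weight : weight r c + block_count K x 0 = weight r c0 + K }.

Lemma firing_inv_cbar : 0 < n -> firing_inv 0 (fun _ => false) c0 (cbar k c0).
Proof.
move=> n_gt0; have Kr : K <= r by rewrite leq_pmull.
have cbar_in v : 1 <= v <= K -> cbar k c0 v = (c0 v).+1 by rewrite /cbar subn1 => ->.
split=> [//|//|v|i v|//|/=|]; rewrite ?block_count0 ?mul1n //.
- move=> hv; rewrite /cbar subn1 /= ifF; last lia.
  by apply: c0_stable; lia.
- by move=> /[!leqn0] /eqP-> /[!mul1n] hv; rewrite cbar_in ?muln0; lia.
- by rewrite cbar_in; have := @c0_stable K; lia.
- rewrite addn0 /weight (eq_bigr (fun v => c0 v + ((1 <= v) && (v <= K)))) => [|v _].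
    by rewrite big_split /= sum_indicator_interval; congr (_ + _); lia.
  by rewrite /cbar subn1 /=; case: ifP; rewrite ?addn1 ?addn0.
Qed.

Lemma firing_inv_retreat m x d c u : firing_inv m.+1 x d c ->
  (forall w, 1 <= w <= r -> K <= c w -> w <= u) -> u <= m.+1 * K ->
  firing_inv m x d c.
Proof.
case=> range ref beyond interior junction front weight u_max u_le.
split=> //; first lia.
- move=> v hv; case: (ltnP (m.+2 * K) v) => vm; first by apply: beyond; lia.
  case: (leqP K (c v)) => cv; last lia.
  by have := u_max v ltac:(lia) cv; lia.
- by move=> i v hi; apply: interior; lia.
- by move=> i hi; apply: junction; lia.
- by have [-> ->] := junction m (ltnSn m); rewrite block_count_le.
Qed.

Lemma firing_inv_retreat_below m x d c u : 0 < u ->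
  (forall w, 1 <= w <= r -> K <= c w -> w <= u) -> firing_inv m x d c ->
  exists2 m', firing_inv m' x d c & m' * K < u.
Proof.
move=> u0 u_max; elim: m => [|m IH] inv; first by exists 0.
case: (ltnP (m.+1 * K) u) => um; first by exists m.+1.
exact: IH (firing_inv_retreat inv u_max um).
Qed.

Lemma firing_inv_fired_vertex m x d c u : firing_inv m x d c ->
  1 <= u <= r -> K <= c u -> m * K < u -> u <= m.+1 * K /\ x u = false.
Proof.
case=> _ ref beyond interior _ front _ hu cu mu.
have u_le : u <= m.+1 * K.
  by rewrite leqNgt; apply/negP => um; have := beyond u ltac:(lia); lia.
split=> //; apply/negbTE/negP => xu; have := block_count_le K x m.
case: (ltngtP u (m.+1 * K)) => [u_lt|um|u_eq]; [|lia|by move: front; rewrite -u_eq xu; lia].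
by have := interior m u (leqnn m) ltac:(lia); have := ref u hu; rewrite xu; lia.
Qed.

Lemma firing_inv_fire_within m x d c u : firing_inv m x d c ->
  m * K < u <= m.+1 * K -> K <= c u -> x u = false ->
  (forall w, 1 <= w <= r -> K <= c w -> w <= u) ->
  firing_inv m (fun v => x v || (v == u)) d (fire k c u m.+1).
Proof.
case=> range ref beyond interior junction front weight hu cu xu u_max.
have front_r : m.+1 * K <= r := leq_mul range (leqnn K).
have left_blocks i (im : i < m) : i.+1 * K <= m * K := leq_mul im (leqnn K).
have fireE v : fire k c u m.+1 v =
    c v + [&& m * K <= v <= m.+1 * K, v != 0 & v != u] - K * (v == u).
  case: (v =P u) => [->|/eqP vu]; first by rewrite fire_u subn1 !andbF addn0 muln1.
  by rewrite fire_neq // in_edgeE andbT muln0 subn0.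
split=> // [v hv|i v hi hv|i hi|/=|]; rewrite ?fireE ?block_count_mark //.
- by have := beyond v hv; lia.
- have := interior i v hi hv; case: (v =P u) => [vu|/eqP vu].
    subst v; rewrite xu /= !muln0 muln1 !andbF.
    by case: (eqVneq i m) => [im|im]; [subst i | have := left_blocks i]; lia.
  rewrite /= orbF muln0 subn0 andbT.
  by case: (eqVneq i m) => [im|im]; [subst i | have := left_blocks i]; lia.
- have [xi ci] := junction i hi.
  by case: (eqVneq i.+1 m) => [im|im]; [subst m | have := left_blocks i.+1]; lia.
- have := block_count_le K x m; move: front.
  case: (m.+1 * K =P u) => [mu|/eqP mu]; first by subst u; rewrite xu /=; lia.
  rewrite /= ?orbF; case: (x (m.+1 * K)) => /=; first lia.
  case: (leqP K (c (m.+1 * K))) => [cm|]; last lia.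
  by have := u_max (m.+1 * K); lia.
- have := weight_fire range (_ : in_edge k m.+1 u) (_ : 0 < u) cu.
  rewrite in_edgeE; have := left_blocks 0; lia.
Qed.

Lemma firing_inv_fire_forward m x d c : firing_inv m x d c -> m.+1 < n ->
  K <= c (m.+1 * K) -> x (m.+1 * K) = false ->
  firing_inv m.+1 (fun v => (v <= m.+1 * K) && x v)
    (fun v => if v <= m.+1 * K then d v else c v) (fire k c (m.+1 * K) m.+2).
Proof.
case=> _ ref beyond interior junction front weight mn cu xu.
have front_r : m.+2 * K <= r := leq_mul mn (leqnn K).
have left_blocks i (im : i <= m) : i.+1 * K <= m.+1 * K := leq_mul (im : i < m.+1) (leqnn K).
have fireE v : fire k c (m.+1 * K) m.+2 v = c v + (m.+1 * K < v <= m.+2 * K)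
                                             - K * (v == m.+1 * K).
  case: (v =P m.+1 * K) => [->|/eqP vu]; first by rewrite fire_u subn1 ltnn muln1 addn0.
  by rewrite fire_neq // in_edgeE muln0 subn0; congr (_ + _); lia.
have old_blocks i : i <= m ->
    block_count K (fun v => (v <= m.+1 * K) && x v) i = block_count K x i.
  move=> im; apply: eq_block_count => v hv.
  by have := left_blocks i im; case: (leqP v (m.+1 * K)) => //; lia.
have new_block : block_count K (fun v => (v <= m.+1 * K) && x v) m.+1 = 0.
  by apply: block_count0 => w hw; case: (leqP w (m.+1 * K)) => //; lia.
rewrite xu in front.
split=> // [v hv|v hv|i v hi hv|i hi|/=|]; rewrite ?fireE ?new_block.
- by case: (leqP v (m.+1 * K)) => vm; [apply: ref | apply: beyond]; lia.
- by have := beyond v ltac:(lia); lia.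
- case: (eqVneq i m.+1) => [im|im].
    by subst i; rewrite new_block; case: (leqP v (m.+1 * K)) => /=; lia.
  rewrite old_blocks; last lia.
  have := interior i v ltac:(lia) hv; have := left_blocks i.
  by case: (leqP v (m.+1 * K)) => /=; lia.
- case: (eqVneq i m) => [im|im]; first by subst i; rewrite leqnn xu new_block; lia.
  have [xi ci] := junction i ltac:(lia); rewrite old_blocks; last lia.
  by have := left_blocks i.+1; rewrite xi andbF; lia.
- by have := beyond (m.+2 * K) ltac:(lia); case: (leqP (m.+2 * K) (m.+1 * K)) => /=; lia.
- have := weight_fire mn (_ : in_edge k m.+2 (m.+1 * K)) (_ : 0 < m.+1 * K) cu.
  by rewrite in_edgeE old_blocks //; lia.
Qed.

Lemma edge_of_front_block m j u : m * K < u <= m.+1 * K -> in_edge k j.+1 u ->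
  j = m \/ j = m.+1 /\ u = m.+1 * K.
Proof.
have mono a b (ab : a <= b) : a * K <= b * K := leq_mul ab (leqnn K).
rewrite in_edgeE => hu hj.
by have := mono j.+1 m; have := mono m.+1 j; have := mono m.+2 j; lia.
Qed.

Lemma firing_inv_step m x d c c' : firing_inv m x d c -> step n k c c' ->
  exists m' x' d', firing_inv m' x' d' c'.
Proof.
move=> inv [unstable [[|j] [/andP[//= _ jn] ue ->]]].
rewrite subn1 /= in unstable ue *.
have [w hw cw] := unstable_witness unstable.
have [hu cu u_max] := u_c_spec hw cw; rewrite subn1 /= in cu u_max.
set u := u_c k r c in ue hu cu u_max *.
have u0 : 0 < u by case/andP: hu.
have [m' inv' mu] := firing_inv_retreat_below u0 u_max inv.
have [um xu] := firing_inv_fired_vertex inv' hu cu mu.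
have u_block : m' * K < u <= m'.+1 * K by rewrite mu um.
have [jm|[jm uJ]] := edge_of_front_block u_block ue; subst j.
  by do 3 eexists; exact: firing_inv_fire_within inv' u_block cu xu u_max.
by rewrite uJ in cu xu *; do 3 eexists; exact: firing_inv_fire_forward inv' jn cu xu.
Qed.

Lemma firing_inv_reach c : 0 < n -> reach n k (cbar k c0) c ->
  exists m x d, firing_inv m x d c.
Proof.
move=> n_gt0; elim=> [|c1 c2 _ [m [x [d inv]]] st]; last exact: firing_inv_step inv st.
by exists 0, (fun _ => false), c0; exact: firing_inv_cbar.
Qed.

Lemma firing_inv_junction m x d c t : firing_inv m x d c -> t < n ->
  c (t.+1 * K) <= K /\ (c (t.+1 * K) = K -> forall v, t.+1 * K < v <= r -> c v <= k - 2).
Proof.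
case=> _ ref beyond interior junction front _ tn.
have mono a b (ab : a <= b) : a * K <= b * K := leq_mul ab (leqnn K).
have tr := mono _ _ tn.
case: (ltngtP t m) => [tm|mt|->]; last first.
- split=> [|cK v hv]; last exact: beyond.
  by have := block_count_le K x m; move: front; case: (x _); lia.
- by have := beyond (t.+1 * K); have := mono m.+2 t.+1 mt; lia.
have [_ ->] := junction t tm; split=> [|full v hv]; first exact: block_count_le.
case: (ltngtP t.+1 m) => [t1m|mt1|t1m]; [|lia|].
  have [xt _] := junction t.+1 t1m.
  by have := @block_count_lt K x t.+1 (t.+2 * K) ltac:(lia) xt; lia.
subst m; case: (ltnP (t.+2 * K) v) => [vt|vt]; first by apply: beyond; lia.
have xv : x v.
  by apply: contraTT isT => /negbTE xv; have := @block_count_lt K x t.+1 v ltac:(lia) xv; lia.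
case: (ltngtP v (t.+2 * K)) => [vt'|tv|vJ]; [|lia|by move: front; rewrite -vJ xv; lia].
by have := interior t.+1 v (leqnn _) ltac:(lia); have := ref v ltac:(lia); rewrite xv; lia.
Qed.

Lemma firing_inv_weight m x d c : firing_inv m x d c -> weight r c0 <= weight r c.
Proof. by case=> _ _ _ _ _ _ weight; have := block_count_le K x 0; lia. Qed.

End FiringInvariant.

Theorem lemma4p1 (n k : nat) (c0 : config) :
  1 <= n -> 2 <= k -> stable k (n * (k - 1)) c0 ->
  (forall t, 1 <= t <= n -> forall c, in_firing_graph n k c0 c ->
     ((~ stable k (n * (k - 1)) c /\ u_c k (n * (k - 1)) c = t * (k - 1))
      <-> c (t * (k - 1)) = k - 1)) /\
  (forall c, in_firing_graph n k c0 c ->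
     weight (n * (k - 1)) c0 <= weight (n * (k - 1)) c).
Proof.
case: k => [//|K] n_gt0 k_gt1 c0_stable; have K_gt0 : 0 < K by [].
rewrite subn1 /= in c0_stable *.
have graph_bounds c : in_firing_graph n K.+1 c0 c ->
    (forall t, t < n -> c (t.+1 * K) <= K /\
       (c (t.+1 * K) = K -> forall v, t.+1 * K < v <= n * K -> c v <= K.+1 - 2)) /\
    weight (n * K) c0 <= weight (n * K) c.
  case=> [->|/(firing_inv_reach K_gt0 c0_stable n_gt0) [m [x [d inv]]]].
    split=> // t tn; have tK := leq_mul tn (leqnn K).
    by have := @c0_stable (t.+1 * K) ltac:(lia); lia.
  by split=> [t tn|]; [exact: firing_inv_junction inv tn | exact: firing_inv_weight inv].
split=> [[//|t] /andP[_ tn] c /graph_bounds[/(_ t tn) [cJ cJ_full] _]|c /graph_bounds[]//].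
have tK := leq_mul tn (leqnn K).
have := @fires_atP K.+1 (n * K) c (t.+1 * K) k_gt1 ltac:(lia); rewrite subn1; exact.
Qed.
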